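(* Let $\mathbb{K}$ be a field of characteristic zero, $\mathbb{F}$ an algebraic closure of $\mathbb{K}$, and $\alpha\in\mathbb{F}$ algebraic of degree $n$ over $\mathbb{K}$. Let $\psi(t)\in \mathbb{K}(\alpha)(t)^m$ be a proper parametrization of a rational curve $\mathcal{C}\subseteq\mathbb{F}^m$, and assume that $\mathcal{C}$ is defined over $\mathbb{K}$. Let $\phi=(\phi_0,\ldots,\phi_{n-1})$ be the standard parametrization of the hypercircle $\mathcal{U}$ associated to $\psi$. Let $\sigma$ be a $\mathbb{K}$-automorphism of $\mathbb{F}$, let $\phi^{\sigma}$, $\psi^{\sigma}$ be the conjugate parametrizations, and let $u_{\sigma}(t)=(\phi^{\sigma})^{-1}\circ\phi=\sum_{i=0}^{n-1}\sigma(\alpha)^i\phi_i(t)$ be the conjugation isomorphism induced by $\mathcal{U}$ between the pencils of hyperplanes $\{\sum_{i}\alpha^ix_i=t\}$ and $\{\sum_i\sigma(\alpha)^ix_i=t\}$. Then $u_{\sigma}=(\psi^{\sigma})^{-1}\circ\psi$ (as rational maps), i.e. $\psi(t)=\psi^{\sigma}(u_\sigma(t))$.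
   Context: A parametrization $\psi$ of $\mathcal{C}$ is proper if it is birational onto $\mathcal{C}$. A curve is defined over a subfield $\mathbb{L}$ if it is the zero set of polynomials with coefficients in $\mathbb{L}$. For a $\mathbb{K}$-automorphism $\sigma$ of $\mathbb{F}$ and a rational function $f$ with coefficients in $\mathbb{F}$, $f^{\sigma}$ denotes the function obtained by applying $\sigma$ to the coefficients of $f$ (componentwise for tuples). Hypercircle associated to $\psi=(\psi_1,\dots,\psi_m)$: substitute $t=\sum_{i=0}^{n-1}\alpha^it_i$ with new variables $t_0,\dots,t_{n-1}$ and write $\psi_j(\sum_i\alpha^it_i)=\sum_{i=0}^{n-1}\alpha^i F_{ij}/D$ with $F_{ij},D\in\mathbb{K}[t_0,\dots,t_{n-1}]$; let $\mathcal{Z}\subseteq\mathbb{F}^n$ be the Zariski closure of $\{F_{ij}=0,\ 1\le i\le n-1,\ 1\le j\le m\}\setminus\{D=0\}$. When $\mathcal{C}$ is defined over $\mathbb{K}$, $\mathcal{Z}$ has exactly one irreducible component of dimension $1$, the hypercircle $\mathcal{U}$; it is a rational curve parametrized by the pencil of hyperplanes $\{\sum_{i=0}^{n-1}\alpha^ix_i=t\}$, and the resulting proper parametrization $\phi=(\phi_0,\dots,\phi_{n-1})\in\mathbb{K}(\alpha)(t)^n$, characterized by $\sum_{i=0}^{n-1}\alpha^i\phi_i(t)=t$, is called the standard parametrization of $\mathcal{U}$; the inverse of $\phi^\sigma$ is $(x_0,\dots,x_{n-1})\mapsto\sum_i\sigma(\alpha)^ix_i$. *)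

From HB Require Import structures.
From mathcomp Require Import all_boot all_order all_algebra.
From mathcomp Require Export mpoly.
Set Implicit Arguments.
Unset Strict Implicit.
Unset Printing Implicit Defensive.
Import Order.TTheory GRing.Theory Num.Theory.
Local Open Scope ring_scope.

Section Hyper.
Variables (K : fieldType) (F : closedFieldType) (iota : {rmorphism K -> F}).

Definition inK (x : F) : Prop := exists k : K, x = iota k.

(** F is algebraic over K (together with algebraic closedness of F this
    says that F is an algebraic closure of K) *)
Definition algebraic_over_K : Prop :=
  forall x : F, exists p : {poly K}, p != 0 /\ root (map_poly iota p) x.

Definition alg_degree (alpha : F) (n : nat) : Prop :=
  (exists p : {poly K}, [/\ p != 0, size p = n.+1 & root (map_poly iota p) alpha])
  /\ forall p : {poly K}, p != 0 -> root (map_poly iota p) alpha -> (n.+1 <= size p)%N.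

(** elements of K(alpha) = K[alpha] *)
Definition inKa (alpha x : F) : Prop :=
  exists p : {poly K}, x = (map_poly iota p).[alpha].

Definition K_automorphism (s : {rmorphism F -> F}) : Prop :=
  bijective s /\ forall k : K, s (iota k) = iota k.

Definition pset (N : nat) := ('I_N -> F) -> Prop.
Definition seteq N (A B : pset N) := forall x, A x <-> B x.
Definition subset N (A B : pset N) := forall x, A x -> B x.
Definition psubset N (A B : pset N) := subset A B /\ exists x, B x /\ ~ A x.

Definition zeros N (P : {mpoly F[N]} -> Prop) : pset N :=
  fun x => forall p, P p -> p.@[x] = 0.
Definition zclosed N (A : pset N) : Prop :=
  exists P : {mpoly F[N]} -> Prop, seteq A (zeros P).
Definition zclosure N (A : pset N) : pset N :=
  zeros (fun p : {mpoly F[N]} => forall x, A x -> p.@[x] = 0).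
Definition irreducible N (A : pset N) : Prop :=
  [/\ zclosed A, exists x, A x &
      forall B C : pset N, zclosed B -> zclosed C ->
        subset A (fun x => B x \/ C x) -> subset A B \/ subset A C].
Definition dim1 N (A : pset N) : Prop :=
  [/\ irreducible A,
      exists B, irreducible B /\ psubset B A &
      forall B0 B1, irreducible B0 -> irreducible B1 ->
        psubset B0 B1 -> psubset B1 A -> False].
Definition component N (A Z : pset N) : Prop :=
  [/\ irreducible A, subset A Z &
      forall W, irreducible W -> subset A W -> subset W Z -> seteq W A].
Definition mpoly_over_K N (p : {mpoly F[N]}) : Prop := forall m, inK p@_m.

Definition defined_over_K N (A : pset N) : Prop :=
  exists P : {mpoly F[N]} -> Prop,
    (forall p, P p -> mpoly_over_K p) /\ seteq A (zeros P).

Definition rfun := ({poly F} * {poly F})%type.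
Definition rdef (f : rfun) (t : F) : bool := f.2.[t] != 0.
Definition rval (f : rfun) (t : F) : F := f.1.[t] / f.2.[t].
Definition rfun_over_Ka (alpha : F) (f : rfun) : Prop :=
  f.2 != 0 /\ forall i, inKa alpha f.1`_i /\ inKa alpha f.2`_i.
Definition rconj (s : {rmorphism F -> F}) (f : rfun) : rfun :=
  (map_poly s f.1, map_poly s f.2).

Definition cofinitely (P : F -> Prop) : Prop :=
  exists S : seq F, forall t, t \notin S -> P t.

Definition rimage N (psi : 'I_N -> rfun) : pset N :=
  fun x => exists t, (forall j, rdef (psi j) t) /\ forall j, x j = rval (psi j) t.

Definition parametrizes N (psi : 'I_N -> rfun) (C : pset N) : Prop :=
  (forall j, (psi j).2 != 0) /\ seteq C (zclosure (rimage psi)).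

(** psi is a proper (birational) parametrization of C: it parametrizes C and
    has a rational inverse N0/D0 on C (D0 not identically zero on C) *)
Definition proper_param N (psi : 'I_N -> rfun) (C : pset N) : Prop :=
  parametrizes psi C /\
  exists N0 D0 : {mpoly F[N]},
    (exists x, C x /\ D0.@[x] != 0) /\
    cofinitely (fun t => (forall j, rdef (psi j) t) ->
       let x := fun j => rval (psi j) t in D0.@[x] != 0 /\ N0.@[x] / D0.@[x] = t).

Definition lin_form (n : nat) (alpha : F) : {mpoly F[n]} :=
  \sum_(i < n) (alpha ^+ i) *: 'X_i.

Definition pcomp_m (n : nat) (p : {poly F}) (q : {mpoly F[n]}) : {mpoly F[n]} :=
  (map_poly (@mpolyC n F) p).[q].

(** The data (F_ij, D) of the hypercircle construction:
    psi_j(sum_i alpha^i t_i) = sum_i alpha^i F_ij / D with F_ij, D in K[t_0..t_{n-1}] *)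
Definition hyper_decomp (n m : nat) (alpha : F) (psi : 'I_m -> rfun)
    (Fij : 'I_n -> 'I_m -> {mpoly F[n]}) (D : {mpoly F[n]}) : Prop :=
  [/\ D != 0, mpoly_over_K D, forall i j, mpoly_over_K (Fij i j) &
      forall j, pcomp_m (psi j).1 (lin_form n alpha) * D
                = pcomp_m (psi j).2 (lin_form n alpha) *
                  \sum_(i < n) (alpha ^+ i) *: Fij i j].

Definition hyperZ (n m : nat) (Fij : 'I_n -> 'I_m -> {mpoly F[n]}) (D : {mpoly F[n]}) : pset n :=
  zclosure (fun x => D.@[x] != 0 /\ forall (i : 'I_n) j, (0 < i)%N -> (Fij i j).@[x] = 0).

End Hyper.

From Pilot Require Import Defs.
From mathcomp Require Import all_boot all_algebra.
From mathcomp Require Import mpoly.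
From mathcomp Require Import ring.
Import GRing.Theory.
Local Open Scope ring_scope.
Set Implicit Arguments.
Unset Strict Implicit.

(* Write psi_j = a_j / b_j in lowest terms and L_beta(x) = sum_i beta^i x_i.
   Clearing denominators gives a_j(L_alpha) D = b_j(L_alpha) S_j in
   F[t_0..t_{n-1}], where S_j = sum_i alpha^i F_ij.  Where D <> 0 and F_ij = 0
   for i > 0, S_j takes the value F_0j; as D and the F_ij are defined over K,
   applying sigma gives a_j^sigma(L_sigma(alpha)) D = b_j^sigma(L_sigma(alpha)) F_0j
   there as well.  Eliminating D and F_0j, the polynomial
   a_j(L_alpha) b_j^sigma(L_sigma(alpha)) - b_j(L_alpha) a_j^sigma(L_sigma(alpha))
   vanishes on that set, hence on its Zariski closure, in particular at phi(t),
   where L_alpha = t and L_sigma(alpha) = u_sigma(t).  The resulting identity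
   a_j(t) b_j^sigma(u_sigma(t)) = b_j(t) a_j^sigma(u_sigma(t)) is
   psi(t) = psi^sigma(u_sigma(t)) wherever both sides are defined, which is for
   almost all t: u_sigma takes each value c only finitely often, since otherwise
   the identity at u_sigma(t) = c would make psi constant, contradicting
   properness. *)

Section ClosedField.
Variable F : closedFieldType.
Implicit Types (p : {poly F}) (P Q : F -> Prop).

Lemma closed_field_notin (s : seq F) : exists x, x \notin s.
Proof.
have /closed_nonrootP[x] : \prod_(z <- s) ('X - z%:P) != 0.
  by rewrite monic_neq0 // monic_prod_XsubC.
by rewrite root_prod_XsubC; exists x.
Qed.

Lemma closed_poly_eq0 p : (forall x, p.[x] = 0) -> p = 0.
Proof.
move=> p0; apply/eqP/negPn/negP => /closed_nonrootP[x].
by rewrite rootE p0 eqxx.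
Qed.

Lemma cofinitely_poly_neq0 p : p != 0 -> cofinitely (fun t => p.[t] != 0).
Proof.
move=> p_nz; have [rs Ep] := closed_field_poly_normal p.
exists rs => t t_notin; rewrite Ep hornerZ mulf_neq0 ?lead_coef_eq0 //.
by rewrite -rootE root_prod_XsubC.
Qed.

Lemma cofinitelyI P Q :
  cofinitely P -> cofinitely Q -> cofinitely (fun t => P t /\ Q t).
Proof.
case=> [s1 P1] [s2 Q2]; exists (s1 ++ s2) => t.
by rewrite mem_cat negb_or => /andP[/P1 ? /Q2 ?].
Qed.

Lemma cofinitely_mono P Q :
  (forall t, P t -> Q t) -> cofinitely P -> cofinitely Q.
Proof. by move=> PQ [s Ps]; exists s => t /Ps /PQ. Qed.

Lemma cofinitely_all_seq (T : eqType) (s : seq T) (P : T -> F -> Prop) :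
  (forall x, cofinitely (P x)) -> cofinitely (fun t => forall x, x \in s -> P x t).
Proof.
move=> cofP; elim: s => [|x s IHs]; first by exists [::].
apply: cofinitely_mono (cofinitelyI (cofP x) IHs) => t [Pxt Pst] y.
by rewrite inE => /predU1P[->|/Pst].
Qed.

Lemma cofinitely_forall (I : finType) (P : I -> F -> Prop) :
  (forall i, cofinitely (P i)) -> cofinitely (fun t => forall i, P i t).
Proof.
move=> /(cofinitely_all_seq (enum I)); apply: cofinitely_mono => t Pt i.
by apply: Pt; rewrite mem_enum.
Qed.

Lemma cofinitely_two_points P :
  cofinitely P -> exists t1 t2, [/\ t1 != t2, P t1 & P t2].
Proof.
case=> s Ps; have [t1 t1s] := closed_field_notin s.
have [t2] := closed_field_notin (t1 :: s).
rewrite inE negb_or => /andP[t21 t2s].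
by exists t1, t2; rewrite eq_sym t21; split=> //; apply: Ps.
Qed.

Lemma cofinitely_comp_poly_neq0 (u : F -> F) p :
  (forall c, cofinitely (fun t => u t != c)) -> p != 0 ->
  cofinitely (fun t => p.[u t] != 0).
Proof.
move=> u_avoid /cofinitely_poly_neq0[rs p_nz].
apply: cofinitely_mono (cofinitely_all_seq rs u_avoid) => t u_nz.
by apply: p_nz; apply/negP => /u_nz; rewrite eqxx.
Qed.

Definition rgcd (f : rfun F) : {poly F} := gcdp f.1 f.2.
Definition rnum (f : rfun F) : {poly F} := f.1 %/ rgcd f.
Definition rden (f : rfun F) : {poly F} := f.2 %/ rgcd f.

Lemma rnumE f : f.1 = rnum f * rgcd f.
Proof. by rewrite divpK // dvdp_gcdl. Qed.

Lemma rdenE f : f.2 = rden f * rgcd f.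
Proof. by rewrite divpK // dvdp_gcdr. Qed.

Lemma rgcd_neq0 f : f.2 != 0 -> rgcd f != 0.
Proof. by move=> f_nz; rewrite gcdp_eq0 negb_and f_nz orbT. Qed.

Lemma coprimep_rnum_rden f : f.2 != 0 -> coprimep (rnum f) (rden f).
Proof. by move=> f_nz; apply: coprimep_div_gcd; rewrite f_nz orbT. Qed.

Lemma rfun_reduced f : f = (rnum f * rgcd f, rden f * rgcd f).
Proof. by rewrite -rnumE -rdenE; case: f. Qed.

Lemma rconj_reduced (sigma : {rmorphism F -> F}) f :
  rconj sigma f = (map_poly sigma (rnum f) * map_poly sigma (rgcd f),
                   map_poly sigma (rden f) * map_poly sigma (rgcd f)).
Proof. by rewrite /rconj -!rmorphM -rnumE -rdenE. Qed.

Lemma rval_cancel f (a b g : {poly F}) t :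
  f = (a * g, b * g) -> rdef f t -> b.[t] != 0 /\ rval f t = a.[t] / b.[t].
Proof.
move=> ->; rewrite /rdef /rval /= !hornerM mulf_eq0 negb_or => /andP[bt gt].
by rewrite invfM mulrACA divff // mulr1.
Qed.

Lemma rval_conj_of_cross (sigma : {rmorphism F -> F}) f t v :
  rdef f t -> rdef (rconj sigma f) v ->
  (rnum f).[t] * (map_poly sigma (rden f)).[v]
    = (rden f).[t] * (map_poly sigma (rnum f)).[v] ->
  rval f t = rval (rconj sigma f) v.
Proof.
move=> ft fv cross.
have [bt ->] := rval_cancel (rfun_reduced f) ft.
have [bv ->] := rval_cancel (rconj_reduced sigma f) fv.
by apply/eqP; rewrite eqr_div // cross mulrC.
Qed.

(* Coprimality excludes A.[c] = B.[c] = 0, where the hypothesis is vacuous. *)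
Lemma rval_const_of_cross f (A B : {poly F}) c :
  f.2 != 0 -> coprimep A B ->
  (forall t, (rnum f).[t] * B.[c] = (rden f).[t] * A.[c]) ->
  forall t, rdef f t -> rval f t = A.[c] / B.[c].
Proof.
move=> f_nz AB cross.
have Bc : B.[c] != 0.
  apply/eqP => Bc0; move/eqP: f_nz; apply.
  have Ac : A.[c] != 0.
    by apply: coprimep_root (introT eqP Bc0); rewrite coprimep_sym.
  rewrite rdenE (@closed_poly_eq0 (rden f)) ?mul0r // => t; apply/eqP.
  by have /esym/eqP := cross t; rewrite Bc0 mulr0 mulf_eq0 (negbTE Ac) orbF.
move=> t ft; have [bt ->] := rval_cancel (rfun_reduced f) ft.
by apply/eqP; rewrite eqr_div // cross mulrC.
Qed.

Lemma proper_param_nonconst N (f : 'I_N -> rfun F) (C : pset F N) (x : 'I_N -> F) :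
  proper_param f C ->
  ~ (forall t, (forall j, rdef (f j) t) -> forall j, rval (f j) t = x j).
Proof.
case=> [[f_nz _] [N0 [D0 [_ f_inv]]]] f_const.
have f_dom := cofinitely_forall (fun j => cofinitely_poly_neq0 (f_nz j)).
have [t1 [t2 [t12 [d1 /(_ d1)[_ e1]] [d2 /(_ d2)[_ e2]]]]] :=
  cofinitely_two_points (cofinitelyI f_dom f_inv).
move/eqP: t12; apply; rewrite -e1 -e2.
by rewrite !(meval_eq _ (f_const _ d1)) !(meval_eq _ (f_const _ d2)).
Qed.

Lemma cofinitely_neq_of_cross N (f : 'I_N -> rfun F) (C : pset F N)
    (A B : 'I_N -> {poly F}) (u : F -> F) :
  proper_param f C -> (forall j, coprimep (A j) (B j)) ->
  cofinitely (fun t => forall j,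
    (rnum (f j)).[t] * (B j).[u t] = (rden (f j)).[t] * (A j).[u t]) ->
  forall c, cofinitely (fun t => u t != c).
Proof.
move=> f_proper AB cross c.
pose R j := rnum (f j) * (B j).[c]%:P - rden (f j) * (A j).[c]%:P.
have [j Rj_nz | R0] := pickP (fun j => R j != 0).
  apply: cofinitely_mono (cofinitelyI cross (cofinitely_poly_neq0 Rj_nz)).
  move=> t [crt Rt]; apply/eqP => utc; move/eqP: Rt; apply.
  by rewrite /R !hornerE -utc crt subrr.
case: (proper_param_nonconst (x := fun j => (A j).[c] / (B j).[c]) f_proper).
move=> t dom j; apply: rval_const_of_cross (dom j) => //.
  by case: f_proper => -[f_nz _] _; apply: f_nz.
move=> s; apply/eqP; rewrite -subr_eq0.
have /negbFE/eqP/(congr1 (horner^~ s)) := R0 j.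
by rewrite /R !hornerE => ->.
Qed.

Lemma pcomp_mE n p (q : {mpoly F[n]}) x : (pcomp_m p q).@[x] = p.[q.@[x]].
Proof.
rewrite /pcomp_m -horner_map -map_poly_comp; congr (_.[_]).
by rewrite map_poly_id // => c _ /=; rewrite mevalC.
Qed.

Lemma pcomp_mM n p q (r : {mpoly F[n]}) :
  pcomp_m (p * q) r = pcomp_m p r * pcomp_m q r.
Proof. by rewrite /pcomp_m rmorphM hornerM. Qed.

Lemma meval_sumZ n (beta : F) (G : 'I_n -> {mpoly F[n]}) x :
  (\sum_(i < n) beta ^+ i *: G i).@[x] = \sum_(i < n) beta ^+ i * (G i).@[x].
Proof. by rewrite raddf_sum; apply: eq_bigr => i _; apply: mevalZ. Qed.

Lemma lin_formE n (beta : F) x :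
  (lin_form n beta).@[x] = \sum_(i < n) beta ^+ i * x i.
Proof. by rewrite meval_sumZ; apply: eq_bigr => i _; rewrite mevalXU. Qed.

Lemma pcomp_m_lin_form_eq0 n (beta : F) p :
  (0 < n)%N -> pcomp_m p (lin_form n beta) = 0 -> p = 0.
Proof.
move=> n_gt0 p0; apply: closed_poly_eq0 => s.
pose x (i : 'I_n) := if val i == 0%N then s else 0.
have := congr1 (meval x) p0; rewrite pcomp_mE lin_formE meval0.
rewrite (bigD1 (Ordinal n_gt0)) //= big1 ?expr0 ?mul1r ?addr0 // => i i_neq0.
rewrite /x ifN ?mulr0 //; apply: contra i_neq0 => /eqP i0; exact/eqP/val_inj.
Qed.

End ClosedField.

Lemma alg_degree_gt0 (K : fieldType) (F : closedFieldType)
    (iota : {rmorphism K -> F}) alpha n :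
  alg_degree iota alpha n -> (0 < n)%N.
Proof.
case=> -[p [p_nz p_size p_root]] _; rewrite lt0n; apply: contraTneq p_root => n0.
have /size_poly1P[c c_nz ->] : size p == 1%N by rewrite p_size n0.
by rewrite map_polyC rootC fmorph_eq0.
Qed.

Lemma param_image (F : closedFieldType) N (f : 'I_N -> rfun F) (C : pset F N) t :
  parametrizes f C -> (forall j, rdef (f j) t) -> C (fun j => rval (f j) t).
Proof. by case=> _ eqC dom; apply/eqC => p; apply; exists t. Qed.

Lemma mulr_cross_eq (R : fieldType) (a1 b1 a2 b2 d s : R) :
  d != 0 -> a1 * d = b1 * s -> a2 * d = b2 * s -> a1 * b2 = b1 * a2.
Proof.
move=> d_nz e1 e2; apply: (mulIf d_nz).
have -> : a1 * b2 * d = b2 * (a1 * d) by ring.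
have -> : b1 * a2 * d = b1 * (a2 * d) by ring.
by rewrite e1 e2; ring.
Qed.

Lemma meval_conj (K : fieldType) (F : closedFieldType) (iota : {rmorphism K -> F})
    (sigma : {rmorphism F -> F}) n (P : {mpoly F[n]}) y :
  (forall k, sigma (iota k) = iota k) ->
  mpoly_over_K iota P -> sigma P.@[y] = P.@[fun i => sigma (y i)].
Proof.
move=> sigmaK PK; rewrite !mevalE rmorph_sum; apply: eq_bigr => mm _.
rewrite rmorphM rmorph_prod; have [k ->] := PK mm; rewrite sigmaK.
by congr (_ * _); apply: eq_bigr => i _; rewrite rmorphXn.
Qed.

Section Conjugation.
Variables (K : fieldType) (F : closedFieldType) (iota : {rmorphism K -> F}).
Variable sigma : {rmorphism F -> F}.
Hypothesis sigmaK : K_automorphism iota sigma.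
Variables (n : nat) (alpha : F) (D : {mpoly F[n]}) (G : 'I_n -> {mpoly F[n]}).
Hypotheses (DK : mpoly_over_K iota D) (GK : forall i, mpoly_over_K iota (G i)).

Let La := lin_form n alpha.
Let Ls := lin_form n (sigma alpha).

Lemma hypercircle_cross_open (a b : {poly F}) x :
  pcomp_m a La * D = pcomp_m b La * \sum_(i < n) alpha ^+ i *: G i ->
  D.@[x] != 0 -> (forall i : 'I_n, (0 < i)%N -> (G i).@[x] = 0) ->
  a.[La.@[x]] * (map_poly sigma b).[Ls.@[x]]
    = b.[La.@[x]] * (map_poly sigma a).[Ls.@[x]].
Proof.
move=> abD Dx Gx.
have [sinv _ sigmaK'] := sigmaK.1.
pose y i := sinv (x i).
have conj_y P : mpoly_over_K iota P -> sigma P.@[y] = P.@[x].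
  move=> PK; rewrite (meval_conj _ sigmaK.2) //.
  by apply: meval_eq => i; rewrite sigmaK'.
have S_x beta : (\sum_(i < n) alpha ^+ i *: G i).@[x]
              = \sum_(i < n) beta ^+ i * (G i).@[x].
  rewrite meval_sumZ; apply: eq_bigr => i _.
  by case: (posnP i) => [-> | i_gt0]; rewrite ?expr0 // Gx // !mulr0.
have S_y : sigma (\sum_(i < n) alpha ^+ i *: G i).@[y]
         = \sum_(i < n) sigma alpha ^+ i * (G i).@[x].
  rewrite meval_sumZ rmorph_sum; apply: eq_bigr => i _.
  by rewrite rmorphM rmorphXn conj_y.
have La_y : sigma La.@[y] = Ls.@[x].
  rewrite !lin_formE rmorph_sum; apply: eq_bigr => i _.
  by rewrite rmorphM rmorphXn sigmaK'.
have e1 := congr1 (meval x) abD.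
rewrite !mevalM !pcomp_mE in e1.
have e2 := congr1 (fun P => sigma P.@[y]) abD.
rewrite /= !mevalM !rmorphM !pcomp_mE -!horner_map La_y S_y conj_y // -S_x in e2.
exact: mulr_cross_eq Dx e1 e2.
Qed.

Lemma hypercircle_cross_closure (A : pset F n) (a b : {poly F}) x :
  pcomp_m a La * D = pcomp_m b La * \sum_(i < n) alpha ^+ i *: G i ->
  (forall y, A y -> D.@[y] != 0 /\ forall i : 'I_n, (0 < i)%N -> (G i).@[y] = 0) ->
  zclosure A x ->
  a.[La.@[x]] * (map_poly sigma b).[Ls.@[x]]
    = b.[La.@[x]] * (map_poly sigma a).[Ls.@[x]].
Proof.
move=> abD A_open Ax; apply/eqP; rewrite -subr_eq0.
pose Q := pcomp_m a La * pcomp_m (map_poly sigma b) Ls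
        - pcomp_m b La * pcomp_m (map_poly sigma a) Ls.
have Q_eval z : Q.@[z] = a.[La.@[z]] * (map_poly sigma b).[Ls.@[z]]
                       - b.[La.@[z]] * (map_poly sigma a).[Ls.@[z]].
  by rewrite mevalB !mevalM !pcomp_mE.
rewrite -Q_eval; apply/eqP; apply: Ax => y /A_open[Dy Gy].
by apply/eqP; rewrite Q_eval subr_eq0; apply/eqP/hypercircle_cross_open.
Qed.

End Conjugation.

Definition lin_param (F : closedFieldType) n (phi : 'I_n -> rfun F) (beta t : F) : F :=
  \sum_(i < n) beta ^+ i * rval (phi i) t.

Lemma hypercircle_cross (K : fieldType) (F : closedFieldType)
    (iota : {rmorphism K -> F}) (sigma : {rmorphism F -> F})
    n m (alpha : F) (psi : 'I_m -> rfun F) Fij D (U : pset F n)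
    (phi : 'I_n -> rfun F) :
  K_automorphism iota sigma -> (0 < n)%N -> (forall j, (psi j).2 != 0) ->
  hyper_decomp iota alpha psi Fij D -> Defs.subset U (hyperZ Fij D) ->
  parametrizes phi U ->
  cofinitely (fun t => (forall i, rdef (phi i) t) -> lin_param phi alpha t = t) ->
  cofinitely (fun t => (forall i, rdef (phi i) t) /\
    let u := lin_param phi (sigma alpha) t in forall j,
    (rnum (psi j)).[t] * (map_poly sigma (rden (psi j))).[u]
    = (rden (psi j)).[t] * (map_poly sigma (rnum (psi j))).[u]).
Proof.
move=> sigmaK n_gt0 psi_den [_ DK FK Hdec] U_sub phi_param phi_std.
have phi_dom := cofinitely_forall (fun i => cofinitely_poly_neq0 (phi_param.1 i)).
apply: cofinitely_mono (cofinitelyI phi_dom phi_std) => t [dom /(_ dom) std].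
split=> //; cbv zeta => j.
have reduced : pcomp_m (rnum (psi j)) (lin_form n alpha) * D
    = pcomp_m (rden (psi j)) (lin_form n alpha)
      * \sum_(i < n) alpha ^+ i *: Fij i j.
  have g_nz : pcomp_m (rgcd (psi j)) (lin_form n alpha) != 0.
    by apply/eqP => /(pcomp_m_lin_form_eq0 n_gt0) /eqP; apply/negP/rgcd_neq0.
  apply: (mulfI g_nz); rewrite !mulrA -!pcomp_mM ![rgcd _ * _]mulrC -rnumE -rdenE.
  exact: Hdec.
have Ux := U_sub _ (param_image phi_param dom).
have Z_open y :
    D.@[y] != 0 /\ (forall (i : 'I_n) k, (0 < i)%N -> (Fij i k).@[y] = 0) ->
    D.@[y] != 0 /\ forall i : 'I_n, (0 < i)%N -> (Fij i j).@[y] = 0.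
  by case=> Dy Fy; split=> // i; apply: Fy.
move: (hypercircle_cross_closure sigmaK DK (FK^~ j) reduced Z_open Ux).
by rewrite !lin_formE -/(lin_param phi alpha t) std.
Qed.

Theorem theorem1
  (K : fieldType) (F : closedFieldType) (iota : {rmorphism K -> F})
  (charK0 : [pchar K] =i pred0)
  (Falg : algebraic_over_K iota)
  (alpha : F) (n : nat) (alphadeg : alg_degree iota alpha n)
  (m : nat) (psi : 'I_m -> rfun F) (C : pset F m)
  (psiKa : forall j, rfun_over_Ka iota alpha (psi j))
  (Ccurve : dim1 C)
  (psiproper : proper_param psi C)
  (CK : defined_over_K iota C)
  (Fij : 'I_n -> 'I_m -> {mpoly F[n]}) (D : {mpoly F[n]})
  (hdec : hyper_decomp iota alpha psi Fij D)
  (U : pset F n)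
  (Ucomp : component U (hyperZ Fij D)) (Udim : dim1 U)
  (phi : 'I_n -> rfun F)
  (phiKa : forall i, rfun_over_Ka iota alpha (phi i))
  (phiproper : proper_param phi U)
  (phistd : cofinitely (fun t => (forall i, rdef (phi i) t) ->
                 \sum_(i < n) alpha ^+ i * rval (phi i) t = t))
  (sigma : {rmorphism F -> F}) (sigmaK : K_automorphism iota sigma) :
  cofinitely (fun t =>
    (forall i, rdef (phi i) t) /\
    let u := \sum_(i < n) sigma alpha ^+ i * rval (phi i) t in
    forall j, [/\ rdef (psi j) t, rdef (rconj sigma (psi j)) u &
                  rval (psi j) t = rval (rconj sigma (psi j)) u]).
Proof.
have psi_den j : (psi j).2 != 0 by case: psiproper => -[psi_nz _] _.
have [_ U_sub _] := Ucomp.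
have cross := hypercircle_cross sigmaK (alg_degree_gt0 alphadeg) psi_den hdec U_sub
  phiproper.1 phistd.
have u_avoid := cofinitely_neq_of_cross
  (A := fun j => map_poly sigma (rnum (psi j)))
  (B := fun j => map_poly sigma (rden (psi j))) psiproper
  (fun j => etrans (coprimep_map _ _ _) (coprimep_rnum_rden (psi_den j)))
  (cofinitely_mono (fun t => @proj2 _ _) cross).
have conj_dom : cofinitely (fun t => forall j,
    rdef (rconj sigma (psi j)) (lin_param phi (sigma alpha) t)).
  apply: cofinitely_forall => j; apply: cofinitely_comp_poly_neq0 u_avoid _.
  by rewrite map_poly_eq0.
have psi_dom := cofinitely_forall (fun j => cofinitely_poly_neq0 (psi_den j)).
apply: cofinitely_mono (cofinitelyI cross (cofinitelyI psi_dom conj_dom)).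
move=> t [[phi_dom crt] [psi_t conj_t]]; split=> //; cbv zeta => j.
split; [exact: psi_t | exact: conj_t |].
exact: rval_conj_of_cross (psi_t j) (conj_t j) (crt j).
Qed.
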